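(* In the continuous scenario with constant request rate $\lambda$ over $\mathcal X$, for any cache state $\mathcal S$, \[ \bar C(\mathcal S) \ge \lambda k F\left(\frac{|\mathcal X|}{k}\right). \]
   Context: $\mathcal X$ is a bounded (compact) subset of $\mathbb R^p$, a cache holds $k$ objects, $C_a(x,y)=h(\|x-y\|)$ with $h:\mathbb R^+\to\mathbb R^+$ non-decreasing and $\|\cdot\|$ a norm, $C_r>0$ is the retrieval cost, $C(x,y)=\min(C_a(x,y),C_r)$ and $C(x,\mathcal S)=\min(\inf_{y\in\mathcal S}C_a(x,y),C_r)$. Requests have constant spatial density $\lambda$ over $\mathcal X$, and the expected cost of cache state $\mathcal S$ is $\bar C(\mathcal S)=\int_{\mathcal X}\lambda\,C(x,\mathcal S)\,dx$. $|\mathcal A|$ denotes the volume (Lebesgue measure) of $\mathcal A$, $\mathcal B(y,v)$ the ball of volume $v$ centered in $y$, and $F(v)=\int_{\mathcal B(y,v)}C(x,y)\,dx$ (independent of $y$). *)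

From HB Require Import structures.
From mathcomp Require Import all_boot all_order all_algebra.
From mathcomp Require Import all_classical all_reals all_analysis.
Set Implicit Arguments. Unset Strict Implicit. Unset Printing Implicit Defensive.
Import Order.TTheory GRing.Theory Num.Theory.
Import numFieldNormedType.Exports.
Local Open Scope classical_set_scope.
Local Open Scope ring_scope.

(* R^p equipped with its Borel sigma-algebra (generated by the open sets of
   the product topology of 'rV[R]_p). *)
Definition Rp (R : realType) (p : nat) := g_sigma_algebraType (@open 'rV[R]_p).

Definition unit_cube (R : realType) (p : nat) : set 'rV[R]_p :=
  [set x | forall i, 0 <= x ord0 i < 1].

(* mu is the p-dimensional Lebesgue measure on the Borel sets of R^p:
   the translation-invariant Borel measure giving measure 1 to the unit cube
   (this characterizes Lebesgue measure uniquely). *)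
Definition is_lebesgue_measure (R : realType) (p : nat)
    (mu : {measure set (Rp R p) -> \bar R}) : Prop :=
  (forall (A : set (Rp R p)) (a : 'rV[R]_p), measurable A ->
      mu ((fun x : 'rV[R]_p => x + a) @` (A : set 'rV[R]_p) : set (Rp R p)) = mu A) /\
  mu (@unit_cube R p : set (Rp R p)) = 1%E.

Definition is_norm (R : realType) (p : nat) (nrm : 'rV[R]_p -> R) : Prop :=
  (forall x, nrm x = 0 -> x = 0) /\
  (forall (a : R) x, nrm (a *: x) = `|a| * nrm x) /\
  (forall x y, nrm (x + y) <= nrm x + nrm y).

Definition nball (R : realType) (p : nat) (nrm : 'rV[R]_p -> R)
    (y : 'rV[R]_p) (r : R) : set 'rV[R]_p :=
  [set x | nrm (x - y) <= r].

Definition is_ball_of_volume (R : realType) (p : nat)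
    (mu : {measure set (Rp R p) -> \bar R}) (nrm : 'rV[R]_p -> R)
    (y : 'rV[R]_p) (v : \bar R) (B : set 'rV[R]_p) : Prop :=
  exists r : R, 0 <= r /\ B = nball nrm y r /\ mu (B : set (Rp R p)) = v.

Definition Ca (R : realType) (p : nat) (h : R -> R) (nrm : 'rV[R]_p -> R)
    (x y : 'rV[R]_p) : R := h (nrm (x - y)).

Definition cost (R : realType) (p : nat) (h : R -> R) (nrm : 'rV[R]_p -> R)
    (Cr : R) (x y : 'rV[R]_p) : R := Num.min (Ca h nrm x y) Cr.

(* C(x,S) = min(inf_{y in S} C_a(x,y), C_r), for the cache state
   S = {y_0, ..., y_(k-1)} (finite, so the inf is a min) *)
Definition cost_set (R : realType) (p k : nat) (h : R -> R)
    (nrm : 'rV[R]_p -> R) (Cr : R) (x : 'rV[R]_p) (y : 'I_k -> 'rV[R]_p) : R :=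
  \big[Num.min/Cr]_(i < k) Ca h nrm x (y i).

Definition exp_cost (R : realType) (p k : nat)
    (mu : {measure set (Rp R p) -> \bar R}) (X : set 'rV[R]_p)
    (lambda : R) (h : R -> R) (nrm : 'rV[R]_p -> R) (Cr : R)
    (y : 'I_k -> 'rV[R]_p) : \bar R :=
  (\int[mu]_(x in (X : set (Rp R p))) (lambda * cost_set h nrm Cr x y)%:E)%E.

(* F(v) = \int_{B(y,v)} C(x,y) dx, for a ball B = B(y,v) *)
Definition Fball (R : realType) (p : nat)
    (mu : {measure set (Rp R p) -> \bar R}) (h : R -> R)
    (nrm : 'rV[R]_p -> R) (Cr : R) (y : 'rV[R]_p) (B : set 'rV[R]_p) : \bar R :=
  (\int[mu]_(x in (B : set (Rp R p))) (cost h nrm Cr x y)%:E)%E.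

From HB Require Import structures.
From mathcomp Require Import all_boot all_order all_algebra.
From mathcomp Require Import all_classical all_reals all_analysis.
From mathcomp Require Import lra measurable_realfun.
Import Order.TTheory GRing.Theory Num.Theory.
Import numFieldNormedType.Exports.
Local Open Scope classical_set_scope.
Local Open Scope ring_scope.

(* Let r be the radius of the balls of volume |X|/k and t = min(h r, C_r) the
   cost at distance r.  Outside B(y_i, r) one has C(x, y_i) >= t, and inside
   the deficit t - C(x, y_i) is nonnegative, so pointwise
     t <= C(x, S) + sum_i (t - C(x, y_i)) 1_{B(y_i, r)}(x).
   By translation invariance each deficit integrates to t |B| - F, hence
     t |X| <= int_X C(x, S) dx + k (t |B| - F) = int_X C(x, S) dx + t |X| - k F.
   Compactness of X makes t |X| finite, so it cancels. *)

Section seminorm.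
Context {R : realType} {p : nat} {nrm : 'rV[R]_p -> R}.
Hypothesis nrmZ : forall (a : R) x, nrm (a *: x) = `|a| * nrm x.
Hypothesis nrmD : forall x y, nrm (x + y) <= nrm x + nrm y.

Lemma nrm0 : nrm 0 = 0.
Proof. by rewrite -(scale0r (0 : 'rV[R]_p)) nrmZ normr0 mul0r. Qed.

Lemma nrmN x : nrm (- x) = nrm x.
Proof. by rewrite -scaleN1r nrmZ normrN normr1 mul1r. Qed.

Lemma nrm_ge0 x : 0 <= nrm x.
Proof.
have := nrmD x (- x); rewrite subrr nrm0 nrmN -mulr2n.
by rewrite pmulrn_lge0.
Qed.

Lemma ler_nrm_dist x z : `|nrm x - nrm z| <= nrm (x - z).
Proof.
rewrite ler_norml; apply/andP; split.
- by have := nrmD (z - x) x; rewrite subrK -opprB nrmN; lra.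
- by have := nrmD (x - z) z; rewrite subrK; lra.
Qed.

Lemma nrm_sum {I : Type} (s : seq I) (F : I -> 'rV[R]_p) :
  nrm (\sum_(i <- s) F i) <= \sum_(i <- s) nrm (F i).
Proof.
apply: (big_ind2 (fun u b => nrm u <= b)) => //; first by rewrite nrm0.
by move=> u b v c Hu Hv; apply: le_trans (nrmD _ _) _; exact: lerD.
Qed.

Lemma nrm_le_coord (u : 'rV[R]_p) (d : R) : (forall j, `|u 0 j| <= d) ->
  nrm u <= d * \sum_j nrm (delta_mx 0 j).
Proof.
move=> ud; rewrite [in nrm u](row_sum_delta u) mulr_sumr.
apply: le_trans (nrm_sum _ _) _; apply: ler_sum => j _.
by rewrite nrmZ; apply: ler_wpM2r; [exact: nrm_ge0 | exact: ud].
Qed.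

Lemma continuous_nrm : continuous nrm.
Proof.
move=> x; apply/(@cvgrPdist_lt _ _ _ (nbhs x)) => e e0.
set S := \sum_j nrm (delta_mx 0 j).
have S0 : 0 <= S by apply: sumr_ge0 => j _; exact: nrm_ge0.
apply/nbhs_ballP; exists (e / (S + 1)) => /=; first by rewrite divr_gt0 // ltr_wpDl.
move=> z [_ xz]; apply: le_lt_trans (ler_nrm_dist _ _) _.
apply: le_lt_trans (nrm_le_coord (_ - _) (e / (S + 1)) _) _.
  by move=> j; have := xz 0 j; rewrite !mxE => /ltW.
by rewrite mulrAC ltr_pdivrMr ?ltr_wpDl // ltr_pM2l // ltrDl.
Qed.

End seminorm.

Lemma image_addr (V : zmodType) (a : V) (A : set V) :
  (fun x => x + a) @` A = (fun x => x - a) @^-1` A.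
Proof.
apply/seteqP; split=> x /=; first by case=> z Az <-; rewrite addrK.
by exists (x - a); rewrite ?subrK.
Qed.

Section borel_rV.
Context {R : realType} {p : nat}.

Lemma open_measurable_rV (A : set 'rV[R]_p) : open A -> measurable (A : set (Rp R p)).
Proof. exact: sub_sigma_algebra. Qed.

Lemma closed_measurable_rV (A : set 'rV[R]_p) :
  closed A -> measurable (A : set (Rp R p)).
Proof.
move=> cA; rewrite -(setCK A); apply: measurableC; apply: open_measurable_rV.
exact: closed_openC.
Qed.

Lemma continuous_measurable_rV (f : 'rV[R]_p -> R) : continuous f ->
  measurable_fun setT (f : Rp R p -> R).
Proof.
move=> cf; apply: (measurability (@RGenOpens.G R)); first exact: RGenOpens.measurableE.
move=> _ [_ [a [b ->]] <-].
rewrite setTI; apply: open_measurable_rV; apply: open_comp; last exact: interval_open.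
by move=> z _; exact: cf.
Qed.

Lemma measurable_translate (a : 'rV[R]_p) :
  measurable_fun setT ((fun x => x + a) : Rp R p -> Rp R p).
Proof.
apply: (@measurability _ _ (Rp R p) (Rp R p) _ _ (@open 'rV[R]_p)) => // _ [A oA <-].
rewrite setTI; apply: open_measurable_rV; apply: open_comp => // x _.
apply: (@continuousD R 'rV[R]_p 'rV[R]_p (fun x => x) (fun=> a) x); first exact: cvg_id.
exact: cst_continuous.
Qed.

Lemma unit_cube_measurable : measurable (@unit_cube R p : set (Rp R p)).
Proof.
have -> : @unit_cube R p =
    \bigcap_(i in setT) ((fun x : 'rV[R]_p => x ord0 i) @^-1` `[0, 1[).
  apply/seteqP; split=> [x xc i _ | x xc i]; [move: (xc i) | move: (xc i I)];
    by rewrite /= in_itv.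
apply: fin_bigcap_measurable => [|i _]; first exact: finite_finset.
rewrite -[X in measurable X]setTI.
exact: (continuous_measurable_rV _ (@coord_continuous R 1 p ord0 i)) measurableT _
  (measurable_itv _).
Qed.

Lemma measurable_translate_image (a : 'rV[R]_p) (A : set (Rp R p)) :
  measurable A -> measurable ((fun x => x + a) @` (A : set 'rV[R]_p) : set (Rp R p)).
Proof.
move=> mA; rewrite image_addr -[X in measurable X]setTI.
exact: measurable_translate.
Qed.

End borel_rV.

Section translation_invariant_measure.
Context {R : realType} {p : nat} {mu : {measure set (Rp R p) -> \bar R}}.
Hypothesis mu_translate : forall (A : set (Rp R p)) (a : 'rV[R]_p), measurable A ->
  mu ((fun x => x + a) @` (A : set 'rV[R]_p) : set (Rp R p)) = mu A.

Lemma integral_translate (a : 'rV[R]_p) (D : set (Rp R p)) (f : Rp R p -> \bar R) :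
  measurable D -> measurable_fun D f -> (forall x, D x -> (0 <= f x)%E) ->
  (\int[mu]_(x in ((fun x : 'rV[R]_p => x + a)%R @` D : set (Rp R p))) f (x - a)%R
   = \int[mu]_(x in D) f x)%E.
Proof.
move=> mD mf f0.
rewrite image_addr -(ge0_integral_pushforward (measurable_translate (- a)) mu mD mf);
  last by move=> x /[!inE]; exact: f0.
apply: eq_measure_integral; first exact: measurable_translate.
move=> mphi A mA _.
by transitivity (mu ((fun x => x - a) @^-1` A)); rewrite // -image_addr mu_translate.
Qed.

Hypothesis mu_unit_cube : mu (@unit_cube R p : set (Rp R p)) = 1%E.

(* On ['rV_p], [ball] is the sup-norm ball: [ball c 2^-1] is an open unit cube. *)
Lemma measure_ball_half_le1 (c : 'rV[R]_p) :
  (mu (ball c 2^-1 : set (Rp R p)) <= 1)%E.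
Proof.
pose shift : 'rV[R]_p := c - const_mx 2^-1.
rewrite -mu_unit_cube -(mu_translate _ shift (@unit_cube_measurable R p)).
apply: le_measure; rewrite ?inE.
- by apply: open_measurable_rV; exact: ball_open.
- apply: measurable_translate_image; exact: unit_cube_measurable.
move=> x cx; exists (x - shift); last by rewrite subrK.
move: cx => [_ cx] i; have := cx ord0 i; rewrite /ball /= !mxE.
by rewrite ltr_norml => /andP[? ?]; apply/andP; split; lra.
Qed.

Lemma measure_balls_half_le (s : seq 'rV[R]_p) :
  (mu (\big[setU/set0]_(c <- s) ball c 2^-1 : set (Rp R p)) <= (size s)%:R%:E)%E.
Proof.
have mball c : measurable (ball c 2^-1 : set (Rp R p)).
  by apply: open_measurable_rV; exact: ball_open.
elim: s => [|c s IH]; first by rewrite big_nil measure0.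
rewrite big_cons (_ : (size (c :: s))%:R%:E = 1 + (size s)%:R%:E)%E; last first.
  by rewrite -EFinD nat1r.
apply: le_trans (measureU2 _ (mball c) _) _; first exact: bigsetU_measurable.
exact: leeD (measure_ball_half_le1 c) IH.
Qed.

Lemma compact_measure_lty (X : set 'rV[R]_p) : compact X ->
  (mu (X : set (Rp R p)) < +oo)%E.
Proof.
move=> cX; have mX : measurable (X : set (Rp R p)).
  by apply: closed_measurable_rV; apply: compact_closed cX; exact: norm_hausdorff.
move: cX; rewrite compact_cover => /(_ _ X (fun c => ball c 2^-1)) [].
- by move=> c _; exact: ball_open.
- by move=> x Xx; exists x => //; exact: ballxx.
move=> D _; rewrite /cover bigcup_fset => XD.
have muXD : (mu (X : set (Rp R p))
    <= mu (\big[setU/set0]_(c <- finmap.enum_fset D) ball c 2^-1 : set (Rp R p)))%E.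
  apply: le_measure; rewrite ?inE //.
  by apply: bigsetU_measurable => c _; apply: open_measurable_rV; exact: ball_open.
exact: le_lt_trans muXD (le_lt_trans (measure_balls_half_le _) (ltry _)).
Qed.

End translation_invariant_measure.

Lemma measurable_fun_bigmin d (T : measurableType d) (R : realType) (I : Type)
    (s : seq I) (c : R) (F : I -> T -> R) :
  (forall i, measurable_fun setT (F i)) ->
  measurable_fun setT (fun x => \big[Num.min/c]_(i <- s) F i x).
Proof.
move=> mF; elim: s => [|i s IH].
  by under eq_fun do rewrite big_nil; exact: measurable_cst.
by under eq_fun do rewrite big_cons; exact: measurable_minr.
Qed.

Section cost_lower_bound.
Context {R : realType} {p : nat} {mu : {measure set (Rp R p) -> \bar R}}.
Context {nrm : 'rV[R]_p -> R} {h : R -> R} {Cr : R}.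
Hypothesis nrmZ : forall (a : R) x, nrm (a *: x) = `|a| * nrm x.
Hypothesis nrmD : forall x y, nrm (x + y) <= nrm x + nrm y.
Hypothesis h_ge0 : forall r, 0 <= r -> 0 <= h r.
Hypothesis h_nondecreasing : forall r s, 0 <= r -> r <= s -> h r <= h s.
Hypothesis Cr_ge0 : 0 <= Cr.
Hypothesis mu_translate : forall (A : set (Rp R p)) (a : 'rV[R]_p), measurable A ->
  mu ((fun x => x + a) @` (A : set 'rV[R]_p) : set (Rp R p)) = mu A.

Local Notation cost := (cost h nrm Cr).
Local Notation nball := (nball nrm).
Local Notation Fball := (Fball mu h nrm Cr).

Let nrm_ge0 := nrm_ge0 nrmZ nrmD.

Lemma cost_ge0 x a : 0 <= cost x a.
Proof. by rewrite le_min h_ge0. Qed.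

Lemma cost_set_ge0 k x (y : 'I_k -> 'rV[R]_p) : 0 <= cost_set h nrm Cr x y.
Proof.
by apply: (big_ind (fun v => 0 <= v)) => // [u v u0 v0 | i _];
  rewrite ?le_min ?h_ge0 ?u0.
Qed.

Lemma measurable_nrm_sub (a : 'rV[R]_p) :
  measurable_fun setT (fun x : Rp R p => nrm (x - a)).
Proof.
apply: measurableT_comp (measurable_translate (- a)).
exact: continuous_measurable_rV (continuous_nrm nrmZ nrmD).
Qed.

Lemma measurable_Ca (a : 'rV[R]_p) :
  measurable_fun setT (fun x : Rp R p => Ca h nrm x a).
Proof.
have -> : (fun x : Rp R p => h (nrm (x - a))) =
    (fun s => h (Num.max s 0)) \o (fun x : Rp R p => nrm (x - a)).
  by apply: funext => x /=; rewrite max_l.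
apply: measurableT_comp (measurable_nrm_sub a).
apply: nondecreasing_measurable => // s s' ss'.
apply: h_nondecreasing; first by rewrite le_max lexx orbT.
by rewrite ge_max !le_max ss' lexx !orbT.
Qed.

Lemma measurable_cost (a : 'rV[R]_p) : measurable_fun setT (fun x : Rp R p => cost x a).
Proof. exact: measurable_minr (measurable_Ca a) (measurable_cst _). Qed.

Lemma measurable_cost_set k (y : 'I_k -> 'rV[R]_p) :
  measurable_fun setT (fun x : Rp R p => cost_set h nrm Cr x y).
Proof. by apply: measurable_fun_bigmin => i; exact: measurable_Ca. Qed.

Lemma measurable_nball a r : measurable (nball a r : set (Rp R p)).
Proof.
have -> : nball a r = (fun x => nrm (x - a)) @^-1` `]-oo, r].
  by apply/seteqP; split=> x; rewrite /= in_itv.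
rewrite -[X in measurable X]setTI.
exact: measurable_nrm_sub measurableT _ (measurable_itv _).
Qed.

Lemma nball_translate a b r :
  (fun x => x + b) @` nball a r = nball (a + b) r.
Proof.
by rewrite image_addr; apply/seteqP; split=> x; rewrite /nball /= opprD addrA addrAC.
Qed.

Lemma measure_nball_center a b r :
  mu (nball a r : set (Rp R p)) = mu (nball b r : set (Rp R p)).
Proof.
by rewrite -(mu_translate _ (b - a) (measurable_nball a r)) nball_translate addrC subrK.
Qed.

Lemma Fball_nball_center a b r : Fball a (nball a r) = Fball b (nball b r).
Proof.
have -> : nball a r = (fun x => x + (a - b)) @` nball b r.
  by rewrite nball_translate addrC subrK.
rewrite /Fball -[RHS](integral_translate mu_translate (a - b)).
- by apply: eq_integral => x _; rewrite /cost /Ca -addrA -opprD subrK.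
- exact: measurable_nball.
- by apply/measurable_EFinP/measurable_funTS; exact: measurable_cost.
- by move=> x _; rewrite lee_fin cost_ge0.
Qed.

Definition radial_cost (r : R) : R := Num.min (h r) Cr.

Definition cost_deficit (r : R) (a : 'rV[R]_p) : Rp R p -> \bar R :=
  (fun x => (radial_cost r - cost x a)%:E) \_ (nball a r : set (Rp R p)).

Lemma radial_cost_ge0 r : 0 <= r -> 0 <= radial_cost r.
Proof. by move=> r0; rewrite le_min h_ge0. Qed.

Lemma cost_le_radial_cost a r x : nball a r x -> cost x a <= radial_cost r.
Proof. by move=> xa; apply: le_min2 => //; exact: h_nondecreasing. Qed.

Lemma cost_deficit_ge0 r a x : (0 <= cost_deficit r a x)%E.
Proof.
by apply: erestrict_ge0 => z za; rewrite lee_fin subr_ge0 cost_le_radial_cost.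
Qed.

Lemma measurable_cost_deficit r a : measurable_fun setT (cost_deficit r a).
Proof.
apply/(measurable_restrictT _ (measurable_nball a r)).
apply/measurable_EFinP/measurable_funTS.
exact: measurable_funB (measurable_cst _) (measurable_cost a).
Qed.

Lemma integral_cost_deficit r a :
  (\int[mu]_x cost_deficit r a x + Fball a (nball a r)
   = (radial_cost r)%:E * mu (nball a r : set (Rp R p)))%E.
Proof.
have mB := measurable_nball a r.
rewrite -integral_mkcond /Fball -ge0_integralD //.
- rewrite -integral_cst //; apply: eq_integral => x _.
  by rewrite -EFinD subrK.
- by move=> x xa; rewrite lee_fin subr_ge0 cost_le_radial_cost.
- apply/measurable_EFinP/measurable_funTS.
  exact: measurable_funB (measurable_cst _) (measurable_cost a).
- by move=> x _; rewrite lee_fin cost_ge0.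
- by apply/measurable_EFinP/measurable_funTS; exact: measurable_cost.
Qed.

Lemma radial_cost_le_cost_set_add_deficit k (y : 'I_k -> 'rV[R]_p) r x : 0 <= r ->
  ((radial_cost r)%:E
   <= (cost_set h nrm Cr x y)%:E + \sum_(i < k) cost_deficit r (y i) x)%E.
Proof.
move=> r0; set S := (\sum_(i < k) _)%E.
have S0 : (0 <= S)%E by apply: sume_ge0 => i _; exact: cost_deficit_ge0.
apply: (big_ind (fun v => (radial_cost r)%:E <= v%:E + S)%E).
- by apply: le_trans (leeDl _ S0); rewrite lee_fin ge_min lexx orbT.
- by move=> u v ru rv; case: (leP u v).
move=> i _; have [xi | xi] := boolP (x \in (nball (y i) r : set (Rp R p))).
  have Si : (cost_deficit r (y i) x <= S)%E.
    rewrite /S (bigD1 i) //= leeDl //.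
    by apply: sume_ge0 => j _; exact: cost_deficit_ge0.
  apply: le_trans (leeD (lexx _) Si); rewrite /cost_deficit patchT // -EFinD lee_fin.
  by rewrite addrCA lerDl subr_ge0 ge_min lexx.
apply: le_trans (leeDl _ S0); rewrite lee_fin ge_min; apply/orP; left.
apply: h_nondecreasing => //; apply/ltW; rewrite ltNge.
by apply/negP => xr; move: xi; rewrite notin_setE; apply.
Qed.

Lemma radial_cost_mul_measure_le {k} (y : 'I_k -> 'rV[R]_p) {X : set (Rp R p)} {r} :
  measurable X -> 0 <= r ->
  ((radial_cost r)%:E * mu X
   <= \int[mu]_(x in X) (cost_set h nrm Cr x y)%:E
      + \sum_(i < k) \int[mu]_x cost_deficit r (y i) x)%E.
Proof.
move=> mX r0; have mdef i : measurable_fun X (cost_deficit r (y i)).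
  by apply: measurable_funTS; exact: measurable_cost_deficit.
have mcs : measurable_fun X (fun x => (cost_set h nrm Cr x y)%:E).
  by apply/measurable_EFinP/measurable_funTS; exact: measurable_cost_set.
rewrite -integral_cst //.
apply: (@le_trans _ _ (\int[mu]_(x in X)
    ((cost_set h nrm Cr x y)%:E + \sum_(i < k) cost_deficit r (y i) x))%E).
  apply: ge0_le_integral => //.
  - by move=> x _; rewrite lee_fin radial_cost_ge0.
  - by apply: emeasurable_funD mcs _; exact: emeasurable_sum.
  - by move=> x _; exact: radial_cost_le_cost_set_add_deficit.
rewrite ge0_integralD //; first last.
- exact: emeasurable_sum.
- by move=> x _; apply: sume_ge0 => i _; exact: cost_deficit_ge0.
- by move=> x _; rewrite lee_fin cost_set_ge0.
rewrite ge0_integral_sum //; last by move=> i x _; exact: cost_deficit_ge0.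
apply: leeD2l; apply: lee_sum => i _.
apply: ge0_subset_integral => //; first exact: measurable_cost_deficit.
by move=> x _; exact: cost_deficit_ge0.
Qed.

Lemma Fball_mul_add_integral_cost_deficit k (y : 'I_k -> 'rV[R]_p) a r :
  (k%:R%:E * Fball a (nball a r) + \sum_(i < k) \int[mu]_x cost_deficit r (y i) x
   = k%:R%:E * ((radial_cost r)%:E * mu (nball a r : set (Rp R p))))%E.
Proof.
have sum_cst (e : \bar R) : (\sum_(i < k) e = k%:R%:E * e)%E.
  by rewrite sumr_const card_ord mule_natl.
rewrite -!sum_cst addeC -big_split /=; apply: eq_bigr => i _.
rewrite (Fball_nball_center a (y i)) integral_cost_deficit.
by rewrite (measure_nball_center (y i) a).
Qed.

Lemma Fball_mul_le_integral_cost_set k (y : 'I_k -> 'rV[R]_p) (X : set (Rp R p)) a r :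
  measurable X -> mu X \is a fin_num -> 0 <= r ->
  (k%:R%:E * mu (nball a r : set (Rp R p)) <= mu X)%E ->
  (k%:R%:E * Fball a (nball a r) <= \int[mu]_(x in X) (cost_set h nrm Cr x y)%:E)%E.
Proof.
move=> mX finX r0 kBX.
have finTX : ((radial_cost r)%:E * mu X)%E \is a fin_num by rewrite fin_numM.
rewrite -(leeD2rE _ _ finTX).
apply: le_trans (leeD2l _ (radial_cost_mul_measure_le y mX r0)) _.
rewrite addeCA Fball_mul_add_integral_cost_deficit muleCA; apply: leeD2l.
by apply: lee_wpmul2l => //; rewrite lee_fin radial_cost_ge0.
Qed.

End cost_lower_bound.

Theorem theorem8 (R : realType) (p k : nat)
    (mu : {measure set (Rp R p) -> \bar R}) (nrm : 'rV[R]_p -> R)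
    (X : set 'rV[R]_p) (h : R -> R) (Cr lambda : R)
    (y : 'I_k -> 'rV[R]_p) :
  (0 < p)%N -> (0 < k)%N ->
  is_lebesgue_measure mu ->
  is_norm nrm ->
  compact X ->
  (forall r : R, 0 <= r -> 0 <= h r) ->
  (forall r s : R, 0 <= r -> r <= s -> h r <= h s) ->
  0 < Cr ->
  0 <= lambda ->
  injective y -> (forall i, X (y i)) ->
  forall (y0 : 'rV[R]_p) (B : set 'rV[R]_p),
    is_ball_of_volume mu nrm y0 (mu (X : set (Rp R p)) * (k%:R^-1)%:E)%E B ->
    ((lambda * k%:R)%:E * Fball mu h nrm Cr y0 B
       <= exp_cost mu X lambda h nrm Cr y)%E.
Proof.
move=> _ k0 [mu_translate mu_cube] [_ [nrmZ nrmD]] cX h_ge0 h_nd Cr0 l0 _ _ y0 B.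
move=> [r [r0 [-> muB]]].
have mX : measurable (X : set (Rp R p)).
  by apply: closed_measurable_rV; apply: compact_closed cX; exact: norm_hausdorff.
have finX : mu (X : set (Rp R p)) \is a fin_num.
  rewrite ge0_fin_numE ?measure_ge0 //.
  exact: compact_measure_lty mu_translate mu_cube _ cX.
have kB : (k%:R%:E * mu (nball nrm y0 r : set (Rp R p)) = mu (X : set (Rp R p)))%E.
  by rewrite muB -(fineK finX) -!EFinM mulrCA mulfV ?mulr1 // pnatr_eq0 -lt0n.
rewrite /exp_cost (eq_integral
  (fun x : Rp R p => lambda%:E * (cost_set h nrm Cr x y)%:E))%E; last first.
  by move=> x _; rewrite EFinM.
rewrite ge0_integralZl //; first last.
- by move=> x _; rewrite lee_fin (cost_set_ge0 nrmZ nrmD h_ge0 (ltW Cr0)).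
- apply/measurable_EFinP/measurable_funTS.
  exact: measurable_cost_set nrmZ nrmD h_nd _ y.
rewrite EFinM -muleA; apply: lee_wpmul2l; first by rewrite lee_fin.
apply: (Fball_mul_le_integral_cost_set nrmZ nrmD h_ge0 h_nd (ltW Cr0) mu_translate)
  => //.
by rewrite kB.
Qed.
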